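(* Let $N\ge 1$ and let $\Sigma_N^{+}$ be the space of sequences $(x_n)_{n\in\mathbb{N}}$ with $x_n\in\{1,\dots,N\}$, with metric $d(x,y)=2^{-\min\{i:x_i\neq y_i\}}$. For $1\le i\le N$ let $W_i=\{x\in\Sigma_N^+: x_1=i\}$. Let $T:\Sigma_N^+\to\Sigma_N^+$ be a continuous surjection such that for every $1\le i\le N$ there exists $x^i\in W_i$ with $T(x^i)\in W_i$. Then there exists a continuous surjection $\widetilde T:\Sigma_N^+\to\Sigma_N^+$ such that for every $x\in\Sigma_N^+$ and every $i$, $\widetilde T(x)\in W_i$ if and only if $T(x)\in W_i$, and the orbit of every point under $\widetilde T$ is finally periodic.
   Context: The orbit of $x$ under a map $S$ is finally periodic if there exist integers $j,M>0$ with $S^{M+j}(x)=S^{j}(x)$. *)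

From Stdlib Require Import Reals ClassicalEpsilon.
From mathcomp Require Import all_boot.

Set Implicit Arguments.
Unset Strict Implicit.
Unset Printing Implicit Defensive.

(* Sigma_N^+ : one-sided sequences over the alphabet 'I_N = {0,...,N-1}
   (relabelling of {1,...,N}); coordinates are indexed by nat, the first
   coordinate being x 0. *)
Definition seqN (N : nat) := nat -> 'I_N.

Definition sdist (N : nat) (x y : seqN N) : R :=
  match excluded_middle_informative (exists i, x i != y i) with
  | left H => Rpow_def.pow (Rinv 2) (ex_minn H)
  | right _ => R0
  end.

Definition scontinuous (N : nat) (T : seqN N -> seqN N) : Prop :=
  forall (x : seqN N) (eps : R), Rlt R0 eps ->
    exists delta : R, Rlt R0 delta /\
      forall y : seqN N, Rlt (sdist x y) delta -> Rlt (sdist (T x) (T y)) eps.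

Definition ssurjective (N : nat) (T : seqN N -> seqN N) : Prop :=
  forall y : seqN N, exists x : seqN N, T x = y.

Definition W (N : nat) (i : 'I_N) : seqN N -> Prop := fun x => x 0%N = i.

Definition finally_periodic (A : Type) (S : A -> A) (x : A) : Prop :=
  exists j M : nat, (0 < j)%N /\ (0 < M)%N /\ iter (M + j) S x = iter j S x.

(** [Ttilde] keeps the first symbol of [T x] but collapses every orbit onto a
    fixed point. By continuity, each symbol [i] has a block [c i] starting
    with [i] such that every [y] beginning with [c i] has [T y] in [W i]; pad
    these blocks to a common length [L + 1]. On a point beginning with the
    block of its own first symbol, [Ttilde] keeps that symbol and deletes the
    next [L] ones (this makes it onto); on any other point [x] it returns the
    point [cycle_code (T x 0)] repeating a block forever. Those points are
    fixed, and an orbit that never leaves the coded points is itself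
    [cycle_code (x 0)]. *)

From Stdlib Require Import Reals ClassicalEpsilon.
From mathcomp Require Import all_boot.
From Stdlib Require Import FunctionalExtensionality Lra Lia.
From mathcomp Require Import zify.

Set Implicit Arguments.
Unset Strict Implicit.
Unset Printing Implicit Defensive.

Definition agree_upto (N k : nat) (x y : seqN N) : Prop :=
  forall n, (n <= k)%N -> x n = y n.

Lemma half_pow_pos (k : nat) : Rlt R0 (Rpow_def.pow (Rinv 2) k).
Proof. by apply: pow_lt; lra. Qed.

Lemma half_pow_le (m n : nat) : (m <= n)%N ->
  Rle (Rpow_def.pow (Rinv 2) n) (Rpow_def.pow (Rinv 2) m).
Proof.
move/subnK <-; elim: (n - m)%N => [|d IH]; first exact: Rle_refl.
rewrite addSn /=; have := half_pow_pos (d + m); lra.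
Qed.

Lemma half_pow_lt_exists (eps : R) : Rlt R0 eps ->
  exists k, Rlt (Rpow_def.pow (Rinv 2) k) eps.
Proof.
move=> eps_gt0.
have [k Hk] := pow_lt_1_zero (Rinv 2) ltac:(rewrite Rabs_pos_eq; lra) eps eps_gt0.
exists k; have := Hk k (Nat.le_refl k).
by rewrite Rabs_pos_eq //; apply: Rlt_le; apply: half_pow_pos.
Qed.

Lemma sdist_lt_half_pow (N k : nat) (x y : seqN N) :
  Rlt (sdist x y) (Rpow_def.pow (Rinv 2) k) <-> agree_upto k x y.
Proof.
rewrite /sdist; case: excluded_middle_informative => [ex_ne|no_ne]; last first.
  split=> [_ n _|_]; last exact: half_pow_pos.
  by apply/eqP/negPn/negP => ne; apply: no_ne; exists n.
case: (ex_minnP ex_ne) => m ne_m min_m; split=> [lt_m n le_nk|agree].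
  apply/eqP/negPn/negP => ne_n.
  have := half_pow_le (leq_trans (min_m n ne_n) le_nk); lra.
have lt_km : (k < m)%N.
  by rewrite ltnNge; apply/negP => le_mk; rewrite agree // eqxx in ne_m.
have := half_pow_le lt_km; have := half_pow_pos k; rewrite /=; lra.
Qed.

Lemma scontinuousP (N : nat) (F : seqN N -> seqN N) :
  scontinuous F <->
  forall x k, exists m, forall y, agree_upto m x y -> agree_upto k (F x) (F y).
Proof.
split=> [F_cont x k|F_loc x eps eps_gt0].
  have [delta [delta_gt0 F_delta]] := F_cont x _ (half_pow_pos k).
  have [m m_lt] := half_pow_lt_exists delta_gt0.
  exists m => y /sdist_lt_half_pow xy_close.
  by apply/sdist_lt_half_pow/F_delta; lra.
have [k k_lt] := half_pow_lt_exists eps_gt0.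
have [m F_m] := F_loc x k.
exists (Rpow_def.pow (Rinv 2) m); split; first exact: half_pow_pos.
move=> y /sdist_lt_half_pow /F_m /sdist_lt_half_pow; lra.
Qed.

Lemma scontinuous_head (N : nat) (F : seqN N -> seqN N) : scontinuous F ->
  forall x, exists m, forall y, agree_upto m x y -> F y 0%N = F x 0%N.
Proof.
move=> /scontinuousP F_loc x; have [m F_m] := F_loc x 0%N.
by exists m => y /F_m agree; rewrite agree.
Qed.

Lemma finally_periodic_of_fixed (A : Type) (S : A -> A) (x : A) (m : nat) :
  S (iter m S x) = iter m S x -> finally_periodic S x.
Proof. by move=> fixed; exists m.+1, 1%N; rewrite add1n !iterS fixed. Qed.

Section CycleCodes.

Variables (N L : nat) (T : seqN N -> seqN N) (c : 'I_N -> seqN N).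
Hypothesis L_gt0 : (0 < L)%N.
Hypothesis c_head : forall i, c i 0%N = i.
Hypothesis T_head_code : forall i y, agree_upto L y (c i) -> T y 0%N = i.
Hypothesis T_cont : scontinuous T.

Definition coded (x : seqN N) : bool := [forall t : 'I_L.+1, x t == c (x 0%N) t].

Definition drop_code (x : seqN N) : seqN N :=
  fun n => if n == 0%N then x 0%N else x (n + L)%N.

Definition cycle_code (i : 'I_N) : seqN N :=
  fun n => if n == 0%N then i else c i (n.-1 %% L).+1.

Definition Ttilde (x : seqN N) : seqN N :=
  if coded x then drop_code x else cycle_code (T x 0%N).

Lemma codedP (x : seqN N) : reflect (agree_upto L x (c (x 0%N))) (coded x).
Proof.
apply: (iffP forallP) => [coded_x t le_tL|agree t].
  exact: eqP (coded_x (Ordinal (le_tL : (t < L.+1)%N))).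
by apply/eqP/agree; rewrite -ltnS.
Qed.

Lemma coded_cycle_code (i : 'I_N) : coded (cycle_code i).
Proof.
apply/codedP => t le_tL; rewrite /cycle_code /=.
case: eqP => [->|/eqP t_neq0]; first by rewrite c_head.
by rewrite modn_small; [congr (c i); lia | lia].
Qed.

Lemma Ttilde_cycle_code (i : 'I_N) : Ttilde (cycle_code i) = cycle_code i.
Proof.
rewrite /Ttilde coded_cycle_code; apply: functional_extensionality => n.
rewrite /drop_code /cycle_code; case: (eqVneq n 0%N) => [_ //|n_neq0].
have -> : (n + L == 0)%N = false by lia.
have -> : (n + L).-1 = (n.-1 + L)%N by lia.
by rewrite modnDr.
Qed.

Lemma Ttilde_head (x : seqN N) : Ttilde x 0%N = T x 0%N.
Proof.
rewrite /Ttilde; case: codedP => [agree|_] //.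
by rewrite (T_head_code agree).
Qed.

Lemma Ttilde_continuous : scontinuous Ttilde.
Proof.
apply/scontinuousP => x k; have [m T_m] := scontinuous_head T_cont x.
exists (maxn (k + L) m) => y agree n le_nk.
have agree_L : agree_upto L x y by move=> t le_tL; apply: agree; lia.
rewrite /Ttilde; have -> : coded y = coded x.
  by apply: eq_forallb => t; rewrite -!agree_L // -ltnS.
case: (coded x).
  by rewrite /drop_code; case: eqP => _; apply: agree; lia.
by rewrite T_m // => t le_tm; apply: agree; lia.
Qed.

Lemma Ttilde_surjective : ssurjective Ttilde.
Proof.
move=> y; pose x n := if (n <= L)%N then c (y 0%N) n else y (n - L)%N.
have coded_x : coded x by apply/codedP => t le_tL; rewrite /x le_tL c_head.
exists x; rewrite /Ttilde coded_x; apply: functional_extensionality => n.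
rewrite /drop_code /x; case: eqP => [->|/eqP n_neq0]; first by rewrite c_head.
by rewrite ifN ?addnK //; lia.
Qed.

Lemma iter_Ttilde_coded (x : seqN N) (m : nat) :
  (forall j, (j < m)%N -> coded (iter j Ttilde x)) ->
  iter m Ttilde x 0%N = x 0%N /\
  forall t, (0 < t)%N -> iter m Ttilde x t = x (m * L + t)%N.
Proof.
elim: m => [|m IH] coded_before; first by split => // t _; rewrite mul0n.
have [head_m tail_m] := IH (fun j lt_jm => coded_before j (ltnW lt_jm)).
rewrite iterS /Ttilde coded_before // /drop_code; split; first by rewrite head_m.
move=> t t_gt0; rewrite ifN; last by lia.
by rewrite tail_m; [congr x; rewrite mulSn; lia | lia].
Qed.

Lemma coded_orbit_cycle_code (x : seqN N) :
  (forall m, coded (iter m Ttilde x)) -> x = cycle_code (x 0%N).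
Proof.
move=> coded_orbit; apply: functional_extensionality => n.
rewrite /cycle_code; case: (eqVneq n 0%N) => [-> //|n_neq0].
set q := (n.-1 %/ L)%N; set r := (n.-1 %% L)%N.
have lt_rL : (r < L)%N by rewrite ltn_mod.
have n_eq : n = (q * L + r.+1)%N by have := divn_eq n.-1 L; lia.
have [head_q tail_q] := iter_Ttilde_coded (m := q) (fun j _ => coded_orbit j).
have /codedP agree_q := coded_orbit q.
by rewrite n_eq -tail_q // agree_q // head_q.
Qed.

Lemma Ttilde_finally_periodic (x : seqN N) : finally_periodic Ttilde x.
Proof.
case: (classic (exists m, ~~ coded (iter m Ttilde x))) => [[m uncoded]|coded_orbit].
  apply: (finally_periodic_of_fixed (m := m.+1)).
  have -> : iter m.+1 Ttilde x = cycle_code (T (iter m Ttilde x) 0%N).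
    by rewrite iterS /Ttilde (negbTE uncoded).
  exact: Ttilde_cycle_code.
have coded_all m : coded (iter m Ttilde x).
  by apply/negPn/negP => uncoded; apply: coded_orbit; exists m.
apply: (finally_periodic_of_fixed (m := 0%N)) => /=.
by rewrite (coded_orbit_cycle_code coded_all) Ttilde_cycle_code.
Qed.

End CycleCodes.

Lemma exists_cycle_codes (N : nat) (T : seqN N -> seqN N) :
  scontinuous T -> (forall i : 'I_N, exists xi, W i xi /\ W i (T xi)) ->
  exists (L : nat) (c : 'I_N -> seqN N), (0 < L)%N /\
    (forall i, c i 0%N = i) /\
    (forall i y, agree_upto L y (c i) -> T y 0%N = i).
Proof.
move=> T_cont hW.
have /fin_all_exists [code code_spec] : forall i, exists code : seqN N * nat,
    code.1 0%N = i /\ forall y, agree_upto code.2 y code.1 -> T y 0%N = i.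
  move=> i; have [xi [xi_head Txi_head]] := hW i.
  have [m T_m] := scontinuous_head T_cont xi.
  exists (xi, m); split => // y agree /=.
  by rewrite -Txi_head T_m // => n le_nm; rewrite agree.
exists (\max_i (code i).2).+1, (fun i => (code i).1); split => //; split.
  by move=> i; case: (code_spec i).
move=> i y agree; apply: (proj2 (code_spec i)) => n le_n; apply: agree.
by apply: leq_trans le_n (leq_trans (leq_bigmax i) (leqnSn _)).
Qed.

Theorem lemma3p1 (N : nat) (hN : (1 <= N)%N) (T : seqN N -> seqN N)
  (hcont : scontinuous T) (hsurj : ssurjective T)
  (hW : forall i : 'I_N, exists xi : seqN N, W i xi /\ W i (T xi)) :
  exists Tt : seqN N -> seqN N,
    scontinuous Tt /\ ssurjective Tt /\
    (forall (x : seqN N) (i : 'I_N), W i (Tt x) <-> W i (T x)) /\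
    (forall x : seqN N, finally_periodic Tt x).
Proof.
have [L [c [L_gt0 [c_head T_head_code]]]] := exists_cycle_codes hcont hW.
exists (Ttilde L T c); split; [|split; [|split]].
- exact: Ttilde_continuous.
- exact: Ttilde_surjective.
- by move=> x i; rewrite /W Ttilde_head.
- exact: Ttilde_finally_periodic.
Qed.
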